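(* Let $r\ge 1$ be an integer. Define $(B^{(r)}(n,k))_{n\ge0,\,k\in\mathbb{Z}}$ by $B^{(r)}(0,0)=1$, $B^{(r)}(0,k)=0$ for $k\neq0$, $B^{(r)}(n,k)=0$ for $k<0$, and for $n\ge1$ and all $k$, \[ B^{(r)}(n,k)=\bigl(rn-k+1-r\bigr)B^{(r)}(n-1,k-1)+(k+1)B^{(r)}(n-1,k). \] Then for every $n\ge 1$ and every integer $k$, $B^{(r)}(n,k)$ equals the number of increasing plane full $(r+1)$-ary trees with $n$ internal nodes in which exactly $k+1$ leaves are cadets.
   Context: An increasing plane full $(r+1)$-ary tree with $n$ internal nodes is a rooted tree in which each internal node has exactly $r+1$ children, linearly ordered (first child, ..., $(r+1)$-st child), each node being either internal or a leaf; the $n$ internal nodes carry the distinct labels $1,\dots,n$, and labels increase along every path from the root (so the root is labelled $1$). Equivalently, such trees are built by starting from a single leaf and, at step $i=1,\dots,n$, replacing one chosen leaf by an internal node labelled $i$ having $r+1$ new ordered leaf children. A leaf is a cadet if it is the last ($(r+1)$-st) child of its parent. (The numbers $B^{(r)}(n,k)$ are the numbers of Stirling $r$-permutations of $[n]$ with $k$ descents studied by X. He.) *)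

From mathcomp Require Import all_boot all_order all_algebra.
From Stdlib Require List.
Set Implicit Arguments. Unset Strict Implicit. Unset Printing Implicit Defensive.
Import Order.TTheory GRing.Theory Num.Theory.

Inductive ptree := Leaf | Node of nat & seq ptree.

Fixpoint labels (t : ptree) : seq nat :=
  match t with Leaf => [::] | Node a cs => a :: flatten (map labels cs) end.

Fixpoint full (r : nat) (t : ptree) : bool :=
  match t with
  | Leaf => true
  | Node _ cs => (size cs == r.+1) && all (full r) cs
  end.

Definition lab_gt (a : nat) (c : ptree) : bool :=
  match c with Leaf => true | Node b _ => a < b end.

Fixpoint increasing (t : ptree) : bool :=
  match t with
  | Leaf => true
  | Node a cs => all (lab_gt a) cs && all increasing cs
  end.

Definition incr_tree (r n : nat) (t : ptree) : bool :=
  [&& full r t, increasing t & perm_eq (labels t) (iota 1 n)].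

Definition is_leaf (t : ptree) : bool := if t is Leaf then true else false.

Fixpoint cadets (t : ptree) : nat :=
  match t with
  | Leaf => 0
  | Node _ cs => is_leaf (last (Node 0 [::]) cs) + sumn (map cadets cs)
  end.

Definition card_is (P : ptree -> Prop) (m : nat) : Prop :=
  exists s : seq ptree,
    List.NoDup s /\ (forall t, List.In t s <-> P t) /\ size s = m.

Local Open Scope ring_scope.

Fixpoint B (r n : nat) (k : int) : int :=
  match n with
  | 0%N => (k == 0)%:R
  | n'.+1 =>
      if k < 0 then 0
      else ((r * n'.+1)%:R - k + 1 - r%:R) * B r n' (k - 1) + (k + 1) * B r n' k
  end.

Local Close Scope ring_scope.

From HB Require Import structures.
From mathcomp Require Import all_boot all_order all_algebra zify ring.
From Stdlib Require List.
Set Implicit Arguments. Unset Strict Implicit. Unset Printing Implicit Defensive.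
Import Order.TTheory GRing.Theory.

(* Every tree with n + 1 internal nodes arises from exactly one tree with n
   internal nodes by replacing one of its 1 + r n leaves by the corolla
   labelled n + 1: pruning the node n + 1, whose children are all leaves,
   inverts the grafting.  Regard the root as a last child, so that a tree
   with c cadets arises c times from trees with c cadets (grafting onto a
   cadet) and 1 + r n - (c - 1) times from trees with c - 1 cadets (grafting
   onto any other leaf).  This is the recurrence of B with c = k + 1. *)

Lemma ptree_ind_Forall (P : ptree -> Prop) :
  P Leaf -> (forall a cs, List.Forall P cs -> P (Node a cs)) -> forall t, P t.
Proof.
move=> PLeaf PNode; fix IH 1 => -[|a cs]; first exact: PLeaf.
by apply: PNode; elim: cs => [|c cs IHcs]; constructor.
Qed.

Fixpoint gentree_of_ptree (t : ptree) : GenTree.tree unit :=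
  match t with
  | Leaf => GenTree.Leaf tt
  | Node a cs => GenTree.Node a (map gentree_of_ptree cs)
  end.

Fixpoint ptree_of_gentree (g : GenTree.tree unit) : ptree :=
  match g with
  | GenTree.Leaf _ => Leaf
  | GenTree.Node a gs => Node a (map ptree_of_gentree gs)
  end.

Lemma gentree_of_ptreeK : cancel gentree_of_ptree ptree_of_gentree.
Proof.
elim/ptree_ind_Forall => //= a cs IH; congr Node.
by elim: IH => //= c {}cs -> _ ->.
Qed.

HB.instance Definition _ := Equality.copy ptree (can_type gentree_of_ptreeK).

Lemma ptree_ind_mem (P : ptree -> Prop) :
  P Leaf -> (forall a cs, {in cs, forall c, P c} -> P (Node a cs)) ->
  forall t, P t.
Proof.
move=> PLeaf PNode; elim/ptree_ind_Forall => // a cs IH; apply: PNode.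
by elim: IH => // c {}cs Pc _ IHcs; apply/forall_cons.
Qed.

Definition child_cadets (lc : bool) (t : ptree) : nat := (lc && is_leaf t) + cadets t.

Fixpoint children_cadets (cs : seq ptree) : nat :=
  if cs is c :: cs' then child_cadets (nilp cs') c + children_cadets cs' else 0.

Lemma cadets_node a cs : cadets (Node a cs) = children_cadets cs.
Proof.
rewrite /=; elim: cs => //= c cs <-; rewrite /child_cadets.
by case: cs => [|d cs] /=; [case: c; rewrite //= addn0 | lia].
Qed.

Fixpoint nleaves (t : ptree) : nat :=
  if t is Node _ cs then sumn (map nleaves cs) else 1.

Lemma nleaves_full r t : full r t -> nleaves t = 1 + r * size (labels t).
Proof.
elim/ptree_ind_mem: t => [|a cs IH /andP[/eqP sz_cs f_cs]] /=; first by rewrite muln0.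
suff -> : sumn (map nleaves cs) = size cs + r * size (flatten (map labels cs)).
  by rewrite sz_cs mulnS; lia.
elim: cs IH {sz_cs} f_cs => [|c cs IHcs]; first by rewrite /= muln0.
case/forall_cons=> IHc /IHcs {}IHcs /andP[f_c /IHcs /= ->].
by rewrite IHc // size_cat; lia.
Qed.

Section Graft.

Variable x : ptree.

(* [graft lc t] lists, for each leaf of [t] from left to right, the tree
   obtained by replacing that leaf by [x], paired with whether that leaf is a
   cadet; [t] itself is regarded as a last child iff [lc]. *)
Fixpoint graft (lc : bool) (t : ptree) : seq (ptree * bool) :=
  match t with
  | Leaf => [:: (x, lc)]
  | Node a cs =>
    let fix graft_seq cs := match cs with
      | [::] => [::]
      | c :: cs' => [seq (p.1 :: cs', p.2) | p <- graft (nilp cs') c]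
                    ++ [seq (c :: p.1, p.2) | p <- graft_seq cs']
      end
    in [seq (Node a p.1, p.2) | p <- graft_seq cs]
  end.

Fixpoint graft_seq (cs : seq ptree) : seq (seq ptree * bool) :=
  match cs with
  | [::] => [::]
  | c :: cs' => [seq (p.1 :: cs', p.2) | p <- graft (nilp cs') c]
                ++ [seq (c :: p.1, p.2) | p <- graft_seq cs']
  end.

Lemma graft_node lc a cs :
  graft lc (Node a cs) = [seq (Node a p.1, p.2) | p <- graft_seq cs].
Proof. by rewrite /=; congr map; elim: cs => //= c cs ->. Qed.

Lemma mem_graft_seq_cons c cs p : p \in graft_seq (c :: cs) ->
  (exists2 q, q \in graft (nilp cs) c & p = (q.1 :: cs, q.2)) \/
  (exists2 q, q \in graft_seq cs & p = (c :: q.1, q.2)).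
Proof. by rewrite mem_cat => /orP[] /mapP[q q_in ->]; [left | right]; exists q. Qed.

Lemma size_graft_seq_mem cs p : p \in graft_seq cs -> size p.1 = size cs.
Proof.
elim: cs p => // c cs IH p /mem_graft_seq_cons[[q _ ->] | [q /IH + ->]] //=.
by move=> ->.
Qed.

Lemma size_graft lc t : size (graft lc t) = nleaves t.
Proof.
elim/ptree_ind_mem: t lc => // a cs IH lc; rewrite graft_node size_map.
elim: cs IH => //= c cs IHcs /forall_cons[IHc /IHcs {}IHcs].
by rewrite size_cat !size_map IHc IHcs.
Qed.

Lemma count_graft_cadet lc t : count snd (graft lc t) = child_cadets lc t.
Proof.
elim/ptree_ind_mem: t lc => [lc | a cs IH lc]; first by rewrite /= /child_cadets andbT.
rewrite graft_node count_map /child_cadets andbF add0n cadets_node.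
elim: cs IH => //= c cs IHcs /forall_cons[IHc /IHcs {}IHcs].
by rewrite count_cat !count_map -IHc -IHcs.
Qed.

Lemma child_cadets_graft lc t p : ~~ is_leaf x -> p \in graft lc t ->
  child_cadets lc p.1 + p.2 = child_cadets lc t + cadets x.
Proof.
move=> x_node; elim/ptree_ind_mem: t lc p => [lc p | a cs IH lc p].
  by rewrite inE => /eqP-> /=; rewrite /child_cadets (negbTE x_node) /= andbT; lia.
rewrite graft_node => /mapP[q q_in ->] /=.
rewrite /child_cadets !andbF !cadets_node.
elim: cs IH q q_in => //= c cs IHcs /forall_cons[IHc IHcs'] q.
case/mem_graft_seq_cons => [[q' /IHc + ->] | [q' q'_in ->]] /=; first lia.
rewrite /nilp (size_graft_seq_mem q'_in).
by have := IHcs IHcs' q' q'_in; lia.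
Qed.

Lemma all_graft_seq (P Q : pred ptree) cs : (forall c, P c -> Q c) ->
  {in cs, forall c, P c -> forall lc p, p \in graft lc c -> Q p.1} ->
  all P cs -> forall p, p \in graft_seq cs -> all Q p.1.
Proof.
move=> PQ; elim: cs => //= c cs IHcs /forall_cons[Qc Qcs] /andP[Pc Pcs] p.
case/mem_graft_seq_cons => [[q /(Qc Pc) Qq ->] | [q q_in ->]] /=.
  by rewrite Qq; apply/allP => d /(allP Pcs)/PQ.
by rewrite /= PQ //=; apply: IHcs q_in.
Qed.

Lemma full_graft r lc t p :
  full r x -> full r t -> p \in graft lc t -> full r p.1.
Proof.
move=> fx; elim/ptree_ind_mem: t lc p => [lc p | a cs IH lc p] ft.
  by rewrite inE => /eqP->.
rewrite graft_node => /mapP[q q_in ->] /=.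
case/andP: ft => sz_cs f_cs; rewrite (size_graft_seq_mem q_in) sz_cs /=.
by apply: (all_graft_seq (P := full r)) q_in => // c /IH IHc fc lc' p'; apply: IHc.
Qed.

Lemma lab_gt_graft a lc c p : p \in graft lc c ->
  lab_gt a p.1 = (if c is Leaf then lab_gt a x else lab_gt a c).
Proof.
case: c => [|b cs]; first by rewrite inE => /eqP->.
by rewrite graft_node => /mapP[q _ ->].
Qed.

Lemma increasing_graft lc t p : increasing x -> increasing t ->
  all (lab_gt^~ x) (labels t) -> p \in graft lc t -> increasing p.1.
Proof.
move=> ix; elim/ptree_ind_mem: t lc p => [lc p | a cs IH lc p] it gt_t.
  by rewrite inE => /eqP->.
rewrite graft_node => /mapP[q q_in ->] /=.
case/andP: it => gt_cs i_cs; case/andP: gt_t => gt_a gt_cs_x.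
apply/andP; split.
  apply: (all_graft_seq (P := lab_gt a)) q_in => // c _ gt_c lc' p' /lab_gt_graft->.
  by case: (c) gt_c.
pose P c := increasing c && all (lab_gt^~ x) (labels c).
apply: (all_graft_seq (P := P)) q_in.
- by move=> c /andP[].
- by move=> c /IH IHc /andP[ic gt_c] lc' p'; apply: IHc.
apply/allP => c c_in; apply/andP; split; first exact: (allP i_cs).
by apply/allP => l l_in; apply: (allP gt_cs_x); apply/flatten_mapP; exists c.
Qed.

Lemma perm_labels_graft lc t p : p \in graft lc t ->
  perm_eq (labels p.1) (labels x ++ labels t).
Proof.
elim/ptree_ind_mem: t lc p => [lc p | a cs IH lc p].
  by rewrite inE => /eqP-> /=; rewrite cats0.
rewrite graft_node => /mapP[q q_in ->] /=.
rewrite perm_sym -cat1s perm_catCA /= perm_cons perm_sym.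
elim: cs IH q q_in => // c cs IHcs /forall_cons[IHc IHcs'] q.
case/mem_graft_seq_cons => [[q' /IHc + ->] | [q' /(IHcs IHcs') + ->]] /=.
  by rewrite catA perm_cat2r.
by move=> perm_q'; rewrite perm_sym perm_catCA perm_cat2l perm_sym.
Qed.

Lemma size_labels_graft lc t p : p \in graft lc t ->
  size (labels p.1) = size (labels x) + size (labels t).
Proof. by move/perm_labels_graft/perm_size; rewrite size_cat. Qed.

Lemma uniq_graft lc t : ~~ is_leaf x -> uniq (map fst (graft lc t)).
Proof.
move=> x_node; have x_labels : 0 < size (labels x) by case: (x) x_node.
elim/ptree_ind_mem: t lc => // a cs IH lc.
rewrite graft_node -map_comp (map_comp (Node a) fst) map_inj_uniq; last by move=> ? ? [].
elim: cs IH => // c cs IHcs /forall_cons[IHc /IHcs {}IHcs].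
rewrite /= map_cat cat_uniq -!map_comp.
rewrite (map_comp (cons^~ cs) fst) (map_comp (cons c) fst).
rewrite (map_inj_uniq (f := cons^~ cs)) ?IHc; last by move=> ? ? [].
rewrite (map_inj_uniq (f := cons c)) ?IHcs ?andbT; last by move=> ? ? [].
apply/hasPn => _ /mapP[q _ ->]; apply/negP => /mapP[c' /mapP[p p_in ->] [c_eq _]].
by have := size_labels_graft p_in; rewrite -c_eq; lia.
Qed.

End Graft.

Fixpoint prune (n : nat) (t : ptree) : ptree :=
  match t with
  | Leaf => Leaf
  | Node a cs => if a == n then Leaf else Node a (map (prune n) cs)
  end.

Lemma prune_notin n t : n \notin labels t -> prune n t = t.
Proof.
elim/ptree_ind_mem: t => // a cs IH /=; rewrite inE negb_or eq_sym.
case/andP=> /negbTE-> n_cs; congr Node; apply: map_id_in => c c_in.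
by apply: IH => //; apply: contra n_cs => n_c; apply/flatten_mapP; exists c.
Qed.

Lemma prune_graft n cs0 lc t p : n \notin labels t ->
  p \in graft (Node n cs0) lc t -> prune n p.1 = t.
Proof.
elim/ptree_ind_mem: t lc p => [lc p _ | a cs IH lc p].
  by rewrite inE => /eqP-> /=; rewrite eqxx.
rewrite graft_node /= inE negb_or eq_sym => /andP[/negbTE a_n n_cs].
move=> /mapP[q q_in ->] /=; rewrite a_n; congr Node.
elim: cs IH n_cs q q_in => // c cs IHcs /forall_cons[IHc IHcs'].
rewrite /= mem_cat negb_or => /andP[n_c n_cs] q.
case/mem_graft_seq_cons => [[q' q'_in ->] | [q' q'_in ->]] /=.
  rewrite (IHc _ _ n_c q'_in) map_id_in // => d d_in; apply: prune_notin.
  by apply: contra n_cs => n_d; apply/flatten_mapP; exists d.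
by rewrite prune_notin // (IHcs IHcs' n_cs q' q'_in).
Qed.

Definition corolla (r n : nat) : ptree := Node n (nseq r.+1 Leaf).

Lemma labels_corolla r n : labels (corolla r n) = [:: n].
Proof. by rewrite /=; elim: r. Qed.

Lemma cadets_corolla r n : cadets (corolla r n) = 1.
Proof. by rewrite /=; elim: r. Qed.

Lemma max_label_corolla r n cs : full r (Node n cs) -> increasing (Node n cs) ->
  all (leq^~ n) (labels (Node n cs)) -> Node n cs = corolla r n.
Proof.
case/andP=> /eqP sz_cs _ /andP[gt_cs _] /andP[_ le_cs]; congr Node.
rewrite -sz_cs; apply/all_pred1P/allP => -[// | b ds] c_in.
have n_b : n < b := allP gt_cs _ c_in.
have b_n : b <= n.
  by apply: (allP le_cs); apply/flatten_mapP; exists (Node b ds); rewrite ?mem_head.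
by move: (leq_trans n_b b_n); rewrite ltnn.
Qed.

Lemma full_prune r n t : full r t -> full r (prune n t).
Proof.
elim/ptree_ind_mem: t => // a cs IH /andP[sz_cs f_cs] /=.
case: (a == n) => //=; rewrite size_map sz_cs /=.
by apply/allP => _ /mapP[c c_in ->]; apply: IH => //; apply: (allP f_cs).
Qed.

Lemma increasing_prune n t : increasing t -> increasing (prune n t).
Proof.
elim/ptree_ind_mem: t => // a cs IH /andP[gt_cs i_cs] /=.
case: (a == n) => //=; apply/andP; split; apply/allP => _ /mapP[c c_in ->].
  by case: c c_in => //= b ds /(allP gt_cs); case: (b == n).
by apply: IH => //; apply: (allP i_cs).
Qed.

Lemma labels_prune r n t : full r t -> increasing t -> all (leq^~ n) (labels t) ->
  labels (prune n t) = filter (predC1 n) (labels t).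
Proof.
elim/ptree_ind_mem: t => // a cs IH f_t i_t le_t.
have [a_n | a_n] := eqVneq a n.
  rewrite a_n in f_t i_t le_t *.
  by rewrite (max_label_corolla f_t i_t le_t) labels_corolla /= eqxx.
rewrite /= (negbTE a_n) /= filter_flatten -!map_comp; congr (_ :: flatten _).
case/andP: f_t => _ f_cs; case/andP: i_t => _ i_cs; case/andP: le_t => _ le_cs.
apply/eq_in_map => c c_in /=.
apply: IH; [by [] | exact: (allP f_cs) | exact: (allP i_cs) |].
by apply/allP => l l_in; apply: (allP le_cs); apply/flatten_mapP; exists c.
Qed.

Lemma graft_prune r n lc t : full r t -> increasing t -> all (leq^~ n) (labels t) ->
  uniq (labels t) -> n \in labels t ->
  t \in map fst (graft (corolla r n) lc (prune n t)).
Proof.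
elim/ptree_ind_mem: t lc => // a cs IH lc f_t i_t le_t u_t n_t.
have [a_n | a_n] := eqVneq a n.
  rewrite a_n in f_t i_t le_t *.
  by rewrite (max_label_corolla f_t i_t le_t) /= eqxx mem_head.
rewrite /= (negbTE a_n) graft_node -map_comp (map_comp (Node a) fst).
rewrite mem_map; last by move=> ? ? [].
move: f_t i_t le_t u_t n_t => /= /andP[_ f_cs] /andP[_ i_cs] /andP[_ le_cs] /andP[_ u_cs].
rewrite inE eq_sym (negbTE a_n) /=.
elim: cs IH f_cs i_cs le_cs u_cs => // c cs IHcs /forall_cons[IHc /IHcs {}IHcs] /=.
case/andP=> f_c f_cs /andP[i_c i_cs]; rewrite all_cat cat_uniq mem_cat.
case/andP=> le_c le_cs /and3P[u_c disj u_cs] n_cs.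
rewrite map_cat mem_cat -!map_comp.
have [n_c | n_c] := boolP (n \in labels c).
  have n_cs' : n \notin flatten (map labels cs).
    by apply: contra disj => n_cs'; apply/hasP; exists n.
  rewrite map_id_in => [|d d_in]; last first.
    by apply: prune_notin; apply: contra n_cs' => n_d; apply/flatten_mapP; exists d.
  rewrite (map_comp (cons^~ cs) fst) mem_map; last by move=> ? ? [].
  by rewrite IHc.
rewrite prune_notin // (map_comp (cons c) fst) mem_map; last by move=> ? ? [].
by rewrite IHcs ?orbT //; move: n_cs; rewrite (negbTE n_c).
Qed.

Lemma uniq_flatten_map (T U : eqType) (f : T -> seq U) (g : U -> T) s :
  uniq s -> {in s, forall t, uniq (f t)} ->
  {in s, forall t, {in f t, forall u, g u = t}} -> uniq (flatten (map f s)).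
Proof.
elim: s => //= t s IHs /andP[t_s u_s] /forall_cons[u_t u_fs] /forall_cons[g_t g_fs].
rewrite cat_uniq u_t IHs // andbT; apply/hasPn => u /flatten_mapP[t' t'_s u_t'].
by apply: contra t_s => /g_t g_u; rewrite -g_u (g_fs t' t'_s u u_t').
Qed.

Fixpoint incr_trees (r n : nat) : seq ptree :=
  if n is n'.+1 then
    flatten [seq map fst (graft (corolla r n) true t) | t <- incr_trees r n']
  else [:: Leaf].

Lemma incr_trees_sound r n t : t \in incr_trees r n -> incr_tree r n t.
Proof.
elim: n t => [|n IH] t; first by rewrite inE => /eqP->.
case/flatten_mapP=> t0 /IH /and3P[f_t0 i_t0 l_t0] /mapP[p p_in ->].
apply/and3P; split.
- by apply: full_graft p_in; rewrite //= size_nseq eqxx all_nseq orbT.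
- apply: increasing_graft p_in => //=; first by rewrite !all_nseq !orbT.
  by apply/allP => a; rewrite (perm_mem l_t0) mem_iota /=; lia.
- apply: perm_trans (perm_labels_graft p_in) _.
  rewrite labels_corolla -[n.+1]addn1 iotaD perm_sym perm_catC /= add1n addn1.
  by rewrite perm_cons perm_sym.
Qed.

Lemma incr_trees_complete r n t : incr_tree r n t -> t \in incr_trees r n.
Proof.
elim: n t => [|n IH] t /and3P[f_t i_t l_t].
  by case: t f_t i_t l_t => // a cs _ _ /perm_size.
have le_t : all (leq^~ n.+1) (labels t).
  by apply/allP => l; rewrite (perm_mem l_t) mem_iota; lia.
have n_t : n.+1 \in labels t by rewrite (perm_mem l_t) mem_iota; lia.
have u_t : uniq (labels t) by rewrite (perm_uniq l_t) iota_uniq.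
apply/flatten_mapP; exists (prune n.+1 t); last exact: graft_prune.
apply/IH/and3P; split; [exact: full_prune | exact: increasing_prune |].
rewrite (labels_prune f_t i_t le_t).
have -> : iota 1 n = filter (predC1 n.+1) (iota 1 n.+1).
  rewrite -[n.+1]addn1 iotaD filter_cat /= add1n addn1 eqxx cats0; apply/esym/all_filterP.
  by apply/allP => l; rewrite mem_iota /=; lia.
exact: perm_filter.
Qed.

Lemma uniq_incr_trees r n : uniq (incr_trees r n).
Proof.
elim: n => //= n IH; apply: (uniq_flatten_map (g := prune n.+1)) => // t t_in.
  by apply: uniq_graft.
have n_t : n.+1 \notin labels t.
  by case/incr_trees_sound/and3P: t_in => _ _ /perm_mem->; rewrite mem_iota; lia.
by move=> _ /mapP[p p_in ->]; apply: prune_graft p_in.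
Qed.

Lemma In_mem (T : eqType) (x : T) s : List.In x s <-> x \in s.
Proof.
elim: s => [|y s IHs] //=; rewrite in_cons; split.
  by case=> [->|/IHs->]; rewrite ?eqxx ?orbT.
by case/orP=> [/eqP->|/IHs]; [left | right].
Qed.

Lemma card_is_uniq (P : ptree -> Prop) s :
  uniq s -> (forall t, t \in s <-> P t) -> card_is P (size s).
Proof.
move=> u_s s_P; exists s; split=> //; last by split=> // t; rewrite In_mem.
elim: s u_s {s_P} => [|t s IHs] /=; first by constructor.
by case/andP=> t_s /IHs NoDup_s; constructor=> //; rewrite In_mem; apply/negP.
Qed.

Lemma incr_tree_node r n t : 0 < n -> incr_tree r n t -> ~~ is_leaf t.
Proof. by case: t => // /[swap] /and3P[_ _ /perm_size]; rewrite size_iota => <-. Qed.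

Lemma count_if_pred (T : Type) (a : pred T) (b1 b2 : bool) s :
  count (fun x => if a x then b1 else b2) s = b1 * count a s + b2 * count (predC a) s.
Proof.
by elim: s => [|x s IHs] /=; [rewrite !muln0 | rewrite IHs; case: (a x) => /=; nia].
Qed.

Local Open Scope ring_scope.

Lemma sumn_map_lincomb_count (T : eqType) (f : T -> nat) (a1 a2 : pred T)
    (c1 c2 : int) s :
  {in s, forall t, (f t)%:Z = c1 * (a1 t)%:Z + c2 * (a2 t)%:Z} ->
  (sumn (map f s))%:Z = c1 * (count a1 s)%:Z + c2 * (count a2 s)%:Z.
Proof.
elim: s => [|t s IHs] /=; first by rewrite !mulr0 addr0.
by case/forall_cons=> f_t /IHs f_s; rewrite !PoszD f_t f_s; ring.
Qed.

Lemma count_graft_child_cadets x lc t (j : int) : ~~ is_leaf x -> cadets x = 1%N ->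
  (count (fun u => (child_cadets lc u)%:Z == j) (map fst (graft x lc t)))%:Z =
  j * ((child_cadets lc t)%:Z == j)%:Z
  + ((nleaves t)%:Z - (j - 1)) * ((child_cadets lc t)%:Z == j - 1)%:Z.
Proof.
move=> x_node x_cadet; set c := child_cadets lc t.
have cadets_p p : p \in graft x lc t -> child_cadets lc p.1 = (c + ~~ p.2)%N.
  by move/(child_cadets_graft x_node); rewrite x_cadet -/c; case: (p.2); lia.
rewrite count_map (@eq_in_count _ _ (fun p => if p.2 then c%:Z == j else c.+1%:Z == j)).
  have := count_predC snd (graft x lc t).
  rewrite count_if_pred size_graft count_graft_cadet -/c.
  move: (count (predC snd) _) => m <-.
  by case: eqVneq => ?; case: eqVneq => ?; case: eqVneq => ? /=; lia.
by move=> p /cadets_p /= ->; case: (p.2); rewrite ?addn0 ?addn1.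
Qed.

(* With [lc = true] the single leaf of the empty tree is a cadet, which makes
   [ntrees_cadets] follow the recurrence of [B] from [n = 0] on. *)
Definition ntrees_cadets (r n : nat) (j : int) : nat :=
  count (fun t => (child_cadets true t)%:Z == j) (incr_trees r n).

Lemma ntrees_cadets_rec r n j :
  (ntrees_cadets r n.+1 j)%:Z =
  j * (ntrees_cadets r n j)%:Z
  + ((1 + r * n)%N%:Z - (j - 1)) * (ntrees_cadets r n (j - 1))%:Z.
Proof.
rewrite /ntrees_cadets /= count_flatten -map_comp.
apply: sumn_map_lincomb_count => t /incr_trees_sound /and3P[f_t _ /perm_size l_t] /=.
by rewrite count_graft_child_cadets ?cadets_corolla // (nleaves_full f_t) l_t size_iota.
Qed.

Lemma ntrees_cadets_le0 r n j : j <= 0 -> ntrees_cadets r n j = 0%N.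
Proof.
elim: n j => [|n IH] j j_le0.
  by rewrite /ntrees_cadets /= /child_cadets /=; case: eqP => //; lia.
apply/eqP; rewrite -eqz_nat ntrees_cadets_rec !IH ?mulr0 ?addr0 //; lia.
Qed.

Lemma B_ntrees_cadets r n k : B r n k = (ntrees_cadets r n (k + 1))%:Z.
Proof.
elim: n k => [|n IH] k /=.
  rewrite /ntrees_cadets /= /child_cadets /= addn0.
  have -> : (Posz 1 == k + 1) = (k == 0) by apply/eqP/eqP; lia.
  by case: (k == 0).
rewrite !IH subrK; case: ltP => [k_lt0 | _].
  by rewrite ntrees_cadets_le0 //; lia.
by rewrite ntrees_cadets_rec addrK !natz; ring.
Qed.

Theorem mainTheorem3 (r n : nat) (k : int) :
  (1 <= r)%N -> (1 <= n)%N ->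
  exists m : nat,
    B r n k = m%:Z /\
    card_is (fun t => incr_tree r n t /\ (cadets t)%:Z = k + 1) m.
Proof.
move=> _ n_gt0; exists (ntrees_cadets r n (k + 1)); split; first exact: B_ntrees_cadets.
have -> : ntrees_cadets r n (k + 1) =
          size [seq t <- incr_trees r n | (cadets t)%:Z == k + 1].
  rewrite size_filter; apply: eq_in_count => t /incr_trees_sound /(incr_tree_node n_gt0).
  by rewrite /child_cadets => /negbTE->.
apply: card_is_uniq; first by rewrite filter_uniq ?uniq_incr_trees.
move=> t; rewrite mem_filter; split=> [/andP[/eqP-> /incr_trees_sound] // | [t_incr ->]].
by rewrite eqxx incr_trees_complete.
Qed.
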